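(* Let $n\ge1$, $K=U(n)$, $\underline{\lambda}=(\lambda_1\ge\dots\ge\lambda_{n+1})$, $\underline{\mu}=(\mu_1\ge\dots\ge\mu_n)$ with $\lambda_1\ge\mu_1\ge\lambda_2\ge\dots\ge\mu_n\ge\lambda_{n+1}$, and let $\tilde p$, $W_{(\underline{\lambda},\underline{\mu})}$, $\omega_{(\underline{\lambda},\underline{\mu})}$ and $\Psi$ be as in the context. Then for all $a,b\in T_{\tilde p}(K\cdot\tilde p)^\omega$, $$(\omega_\Lambda)_{\tilde p}(a,b)=\omega_{(\underline{\lambda},\underline{\mu})}(\Psi(a),\Psi(b));$$ that is, the symplectic form on $W_{(\underline{\lambda},\underline{\mu})}$ obtained by transporting the symplectic-slice form $\overline{\omega}_{\tilde p}$ through the isomorphism $\overline{\Psi}\colon W_{\tilde p}\to W_{(\underline{\lambda},\underline{\mu})}$ equals $\omega_{(\underline{\lambda},\underline{\mu})}$.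
   Context: Notation: for a finite real sequence $\underline{\tau}$, $[\underline{\tau}]$ is its set of distinct values, $\underline{\tau}_i$ the $i$-th largest element of $[\underline{\tau}]$, $m(\underline{\tau})=|[\underline{\tau}]|$, $n_v(\underline{\tau})$ the multiplicity of $v$. Shapes: for each value $v$ in $\underline{\lambda}$ or $\underline{\mu}$, the component labelled $v$ is an M-shape if $n_v(\underline{\mu})=n_v(\underline{\lambda})+1$, a W-shape if $n_v(\underline{\lambda})=n_v(\underline{\mu})+1$, a parallelogram-shape if $n_v(\underline{\lambda})=n_v(\underline{\mu})$. For $\mu\in[\underline{\mu}]$ with M-shape component, $r_\mu>0$ with $r_\mu^2=-\prod_{\lambda\in[\underline{\lambda}],\,\text{W}}(\mu-\lambda)\prod_{\tau\in[\underline{\mu}],\,\text{M},\,\tau\ne\mu}\frac{1}{\mu-\tau}$; otherwise $r_\mu=0$. For $\mu$ whose component is not an M-shape, $C_\mu=\sum_{i=1}^{n+1}\lambda_i-\sum_{i=1}^n\mu_i-\mu+\sum_{\tau\in[\underline{\mu}],\,\text{M}}\frac{r_\tau^2}{\mu-\tau}$ (nonzero for parallelogram-shapes). Setting: $\mathcal{O}_\Lambda$ is the set of $(n+1)\times(n+1)$ Hermitian matrices with eigenvalues $\lambda_1,\dots,\lambda_{n+1}$, with symplectic form $(\omega_\Lambda)_p([X,p],[Y,p])=\frac{1}{\sqrt{-1}}\mathrm{Tr}(p[X,Y])$, $X,Y\in\mathfrak{u}(n+1)$; $K$ acts by conjugation by $\mathrm{diag}(1,k)$. $\mathrm{M}=\mathrm{diag}(\mu_1,\dots,\mu_n)$,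 $c=\sum\lambda_i-\sum\mu_i$; for $\mu\in[\underline{\mu}]$ and $\mathbf{v}\in\mathbb{C}^n$, $\mathbf{v}_\mu\in\mathbb{C}^{n_\mu(\underline{\mu})}$ is the block of coordinates $j$ with $\mu_j=\mu$. $\tilde p=\begin{pmatrix}c&\mathbf{z}^\dagger\\ \mathbf{z}&\mathrm{M}\end{pmatrix}\in\mathcal{O}_\Lambda$ with $\mathbf{z}_\mu=(r_\mu,0,\dots,0)^T$ for each $\mu\in[\underline{\mu}]$. Elements of $T_{\tilde p}(K\cdot\tilde p)^\omega$ (the $\omega_\Lambda$-orthogonal complement of the $K$-orbit's tangent space) are Hermitian matrices $\begin{pmatrix}0&\mathbf{v}^\dagger\\ \mathbf{v}&0\end{pmatrix}$. $W_{(\underline{\lambda},\underline{\mu})}=\bigoplus_{\mu\in[\underline{\mu}],\,\text{parallelogram-shape}}\mathbb{C}^{n_\mu(\underline{\mu})}$ with $\omega_{(\underline{\lambda},\underline{\mu})}(\mathbf{u},\mathbf{w})=\frac{1}{\sqrt{-1}}\sum_{\mu\ \text{parallelogram}}\frac{-\mathbf{u}_\mu^\dagger\mathbf{w}_\mu+\mathbf{w}_\mu^\dagger\mathbf{u}_\mu}{C_\mu}$. $\Psi\colon T_{\tilde p}(K\cdot\tilde p)^\omega\to W_{(\underline{\lambda},\underline{\mu})}$ sends the matrix with lower-left block $\mathbf{v}$ to $(\mathbf{v}_\mu)_{\mu\ \text{parallelogram-shape}}$; it is surjective with kernel $T_{\tilde p}(K\cdot\tilde p)\cap T_{\tilde p}(K\cdot\tilde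 p)^\omega$, hence descends to a linear isomorphism $\overline{\Psi}$ from the symplectic slice $W_{\tilde p}=T_{\tilde p}(K\cdot\tilde p)^\omega/(T_{\tilde p}(K\cdot\tilde p)\cap T_{\tilde p}(K\cdot\tilde p)^\omega)$, whose symplectic form $\overline{\omega}_{\tilde p}$ is induced by $\omega_\Lambda$. *)

(* Complex numbers: an arbitrary numClosedFieldType C
   (e.g. algC or R[i] for a real closed / real field R); the real
   numbers lambda_i, mu_i are elements of C satisfying [\is Num.real]. *)
From HB Require Import structures.
From mathcomp Require Import all_boot all_order all_algebra.
Set Implicit Arguments.
Unset Strict Implicit.
Unset Printing Implicit Defensive.
Import Order.TTheory GRing.Theory Num.Theory.
Local Open Scope ring_scope.

Section Slice.
Variable C : numClosedFieldType.
Variable n : nat.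
(* lambda_1 >= ... >= lambda_{n+1} stored as lam 0, ..., lam n;
   mu_1 >= ... >= mu_n stored as mu 0, ..., mu (n-1).  Values of lam, mu
   outside these ranges are never used. *)
Variables lam mu : nat -> C.

Definition adjmx (m k : nat) (A : 'M[C]_(m, k)) : 'M[C]_(k, m) :=
  (map_mx (fun x => x^*) A)^T.

Definition skew_herm (m : nat) (X : 'M[C]_m) : Prop := adjmx X = - X.

Definition lam_vals : seq C := undup [seq lam i | i <- iota 0 n.+1].
Definition mu_vals : seq C := undup [seq mu i | i <- iota 0 n].

Definition n_lam (v : C) : nat := count (fun i => lam i == v) (iota 0 n.+1).
Definition n_mu (v : C) : nat := count (fun i => mu i == v) (iota 0 n).

Definition is_M (v : C) : bool := n_mu v == (n_lam v).+1.
Definition is_W (v : C) : bool := n_lam v == (n_mu v).+1.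
Definition is_par (v : C) : bool := n_lam v == n_mu v.

Definition r_sq (m : C) : C :=
  if is_M m then
    - ((\prod_(l <- lam_vals | is_W l) (m - l)) *
       (\prod_(t <- mu_vals | is_M t && (t != m)) (m - t)^-1))
  else 0.
Definition r_ (m : C) : C := sqrtC (r_sq m).

Definition c_ : C := \sum_(i < n.+1) lam i - \sum_(i < n) mu i.

Definition C_ (m : C) : C :=
  \sum_(i < n.+1) lam i - \sum_(i < n) mu i - m
  + \sum_(t <- mu_vals | is_M t) r_ t ^+ 2 / (m - t).

(* z : for each value mu, z_mu = (r_mu, 0, ..., 0): the coordinate j gets
   r_{mu_j} iff j is the first index in the block of mu_j *)
Definition z_ (j : nat) : C :=
  if has (fun j' => mu j' == mu j) (iota 0 j) then 0 else r_ (mu j).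

(* p~ = [[c, z^dagger], [z, M]] ; index 0 is the first row/column *)
Definition ptilde : 'M[C]_(n.+1) :=
  \matrix_(i < n.+1, j < n.+1)
    if (i == 0 :> nat) && (j == 0 :> nat) then c_
    else if (i == 0 :> nat) then (z_ j.-1)^*
    else if (j == 0 :> nat) then z_ i.-1
    else if i == j then mu i.-1 else 0.

(* KKS form at p: omega_p([X,p],[Y,p]) = (1/i) Tr(p [X,Y]) *)
Definition omegaL (p X Y : 'M[C]_(n.+1)) : C :=
  'i^-1 * \tr (p *m (X *m Y - Y *m X)).

Definition bracket (X p : 'M[C]_(n.+1)) : 'M[C]_(n.+1) := X *m p - p *m X.

(* Lie algebra of K = {diag(1,k) : k in U(n)}: the matrices diag(0, Z),
   Z in u(n) *)
Definition in_LieK (Z : 'M[C]_(n.+1)) : Prop :=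
  skew_herm Z /\ (forall j : 'I_n.+1, Z ord0 j = 0) /\
  (forall i : 'I_n.+1, Z i ord0 = 0).

(* [X,p~] lies in T_{p~}(K.p~)^omega *)
Definition in_perp (X : 'M[C]_(n.+1)) : Prop :=
  forall Z, in_LieK Z -> omegaL ptilde X Z = 0.

(* W_(lambda,mu) is represented inside C^n (coordinates indexed by j < n),
   as the vectors supported on the coordinates j with mu_j of
   parallelogram shape.  Psi keeps the lower-left block v on those
   coordinates. *)
Definition Psi (a : 'M[C]_(n.+1)) : nat -> C :=
  fun j => if is_par (mu j) then a (inord j.+1) ord0 else 0.

Definition omegaLM (u w : nat -> C) : C :=
  'i^-1 * \sum_(m <- mu_vals | is_par m)
     (\sum_(j <- iota 0 n | mu j == m)
        (- ((u j)^* * w j) + (w j)^* * u j)) / C_ m.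

End Slice.

(** Write [x_j] for the entries of the first column of [X] below the corner
    and [b_j] for those of [[X, p~]].  Orthogonality to the tangent space of
    the [K]-orbit kills the lower-right block of [[X, p~]]; this expresses the
    lower-right block of [X] through the [x_j] and turns [omega_Lambda(X, Y)]
    into [(1/i) sum_j (conj b(Y)_j x(X)_j - b(Y)_j conj x(X)_j)].  If [mu_j]
    is not of M-shape then [b_j = C_(mu_j) x_j].  For a W-shape this vanishes:
    the partial fraction expansion of [prod_W (y - l) / prod_M (y - m)] has
    residues [-r_m^2] (positive by a sign count coming from interlacing), and
    evaluating it at a W-value [l] gives exactly [C_l = 0].  For an M-shape
    the relevant entries are zero or purely imaginary, so those summands
    cancel, and the parallelogram summands are those of [omega_(lambda,mu)]. *)

From Pilot Require Import Defs.
From HB Require Import structures.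
From mathcomp Require Import all_boot all_order all_algebra.
From mathcomp Require Import zify ring.
Import Order.TTheory GRing.Theory Num.Theory.
Local Open Scope ring_scope.

(** * Counting and summing along sequences *)

Lemma sub_in_count {T : eqType} (a1 a2 : pred T) (s : seq T) :
  {in s, forall x, a1 x -> a2 x} -> (count a1 s <= count a2 s)%N.
Proof.
elim: s => //= x s IH a12; apply: leq_add; last first.
  by apply: IH => y ys; apply: a12; rewrite inE ys orbT.
by case: (a1 x) (a12 x (mem_head x s)) => // ->.
Qed.

Lemma count_le_split {d : Order.disp_t} {T : porderType d} {I : Type}
    (f : I -> T) (v : T) (s : seq I) :
  count (fun i => (v <= f i)%O) s =
  (count (fun i => (v < f i)%O) s + count (fun i => f i == v) s)%N.
Proof.
elim: s => //= i s ->; rewrite le_eqVlt eq_sym.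
by case: eqP => [->|_]; rewrite ?ltxx /=; lia.
Qed.

Lemma sum_by_values {V : nmodType} {I : Type} {T : eqType}
    (s : seq I) (g : I -> T) (vs : seq T) (F : T -> V) :
  uniq vs -> {subset [seq g i | i <- s] <= vs} ->
  \sum_(i <- s) F (g i) = \sum_(v <- vs) F v *+ count (fun i => g i == v) s.
Proof.
move=> vs_uniq; elim: s => [|i s IH] /= s_vs.
  by rewrite big_nil big1 // => v _; rewrite mulr0n.
rewrite big_cons IH => [|v vs']; last by apply: s_vs; rewrite inE vs' orbT.
under [RHS]eq_bigr do rewrite /= mulrnDr.
rewrite big_split /=; congr (_ + _).
rewrite (bigD1_seq (g i)) ?s_vs ?mem_head //= eqxx mulr1n.
by rewrite big1 ?addr0 // => v; rewrite eq_sym => /negbTE ->; rewrite mulr0n.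
Qed.

Definition first_occurrence {T : eqType} (f : nat -> T) (j : nat) : bool :=
  ~~ has (fun i => f i == f j) (iota 0 j).

Lemma first_occurrence_inj {T : eqType} {f : nat -> T} {j l : nat} :
  first_occurrence f j -> first_occurrence f l -> f j = f l -> j = l.
Proof.
move=> /hasPn fj /hasPn fl fjl; case: (ltngtP j l) => // jl.
  by have := fl j; rewrite mem_iota jl fjl eqxx => /(_ isT).
by have := fj l; rewrite mem_iota jl fjl eqxx => /(_ isT).
Qed.

Lemma first_occurrence_before {T : eqType} {f : nat -> T} {j : nat} :
  ~~ first_occurrence f j ->
  exists2 k, (k < j)%N & f k = f j /\ first_occurrence f k.
Proof.
rewrite negbK => has_j; set k := find (fun i => f i == f j) (iota 0 j).
have k_lt : (k < j)%N by rewrite -[j in (_ < j)%N](size_iota 0) -has_find.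
have /eqP fk := nth_find 0%N has_j; rewrite -/k nth_iota ?add0n // in fk.
exists k => //; split => //; apply/hasPn => i; rewrite mem_iota add0n fk => /andP[_ ik].
by have := before_find 0%N ik; rewrite nth_iota ?add0n ?(ltn_trans ik) // => ->.
Qed.

Lemma sum_first_occurrences {V : nmodType} {T : eqType} (f : nat -> T)
    (g : T -> V) (N : nat) :
  \sum_(l < N) (if first_occurrence f l then g (f l) else 0) =
  \sum_(t <- undup [seq f i | i <- iota 0 N]) g t.
Proof.
elim: N => [|N IH]; first by rewrite big_ord0 big_nil.
have -> : iota 0 N.+1 = iota 0 N ++ [:: N] by rewrite -addn1 iotaD.
rewrite big_ord_recr IH map_cat undup_cat big_cat /= big_seq1.
set seen := undup [seq f i | i <- iota 0 N].
have -> : first_occurrence f (@ord_max N) = (f N \notin seen).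
  by rewrite /first_occurrence mem_undup -has_pred1 has_map.
have [f_seen|f_new] /= := boolP (f N \in seen).
  rewrite addr0 (bigD1_seq (f N)) ?undup_uniq //= addrC big_filter.
  by congr (_ + _); apply: eq_bigl => x; rewrite mem_seq1.
congr (_ + _); congr (\sum_(_ <- _) _); apply/esym/all_filterP/allP => x xs.
by rewrite mem_seq1; apply: contraTneq xs => ->.
Qed.

Lemma sumr_nat_count {R : pzSemiRingType} {T : Type} (s : seq T) (b : pred T) :
  \sum_(x <- s) (b x)%:R = (count b s)%:R :> R.
Proof. by rewrite -sum1_count natr_sum [RHS]big_mkcond; apply: eq_bigr => x _; case: (b x). Qed.

Lemma big_ord_iota {R : Type} {idx : R} (op : R -> R -> R) (m : nat) (P : pred nat)
    (F : nat -> R) :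
  \big[op/idx]_(i < m | P i) F i = \big[op/idx]_(i <- iota 0 m | P i) F i.
Proof. by rewrite -big_mkord /index_iota subn0. Qed.

Lemma sum_fibers {R : pzSemiRingType} {T : eqType} (f : nat -> T) (s : seq nat)
    (P : pred T) (F : nat -> R) (G : T -> R) :
  \sum_(v <- undup [seq f i | i <- s] | P v) (\sum_(i <- s | f i == v) F i) * G v =
  \sum_(i <- s | P (f i)) F i * G (f i).
Proof.
under eq_bigr do rewrite mulr_suml big_mkcond.
rewrite exchange_big [RHS]big_mkcond; apply: eq_big_seq => i i_s /=.
rewrite big_mkcond (bigD1_seq (f i)) ?undup_uniq ?mem_undup ?map_f //= eqxx.
rewrite big1 ?addr0 => [|v]; first by case: (P (f i)).
by rewrite eq_sym => /negbTE ->; rewrite if_same.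
Qed.

(** * Lagrange interpolation and partial fractions *)

Lemma size_sub_prod_XsubC {R : comNzRingType} (s1 s2 : seq R) :
  size s1 = size s2 -> \sum_(x <- s1) x = \sum_(x <- s2) x ->
  (size (\prod_(x <- s1) ('X - x%:P) - \prod_(x <- s2) ('X - x%:P))%R <= (size s1).-1)%N.
Proof.
move=> size12 sum12; have [/size0nil s1_nil|s1_gt0] := posnP (size s1).
  by move: size12; rewrite s1_nil => /esym/size0nil ->; rewrite !big_nil subrr size_poly0.
have lead (s : seq R) : (\prod_(x <- s) ('X - x%:P))`_(size s) = 1.
  by have := lead_coef_prod_XsubC s xpredT id; rewrite lead_coefE size_prod_XsubC.
apply/leq_sizeP => j; rewrite leq_eqVlt => /orP[/eqP <-|].
  rewrite coefB coefPn_prod_XsubC -?lt0n // size12.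
  by rewrite coefPn_prod_XsubC -?size12 -?lt0n // sum12 subrr.
rewrite (prednK s1_gt0) leq_eqVlt => /orP[/eqP <-|lt_j].
  by rewrite coefB lead size12 lead subrr.
by rewrite coefB !nth_default ?subrr // size_prod_XsubC -?size12.
Qed.

Section PartialFractions.
Variable F : fieldType.

Lemma horner_prod_XsubC (s : seq F) (P : pred F) (y : F) :
  (\prod_(x <- s | P x) ('X - x%:P)).[y] = \prod_(x <- s | P x) (y - x).
Proof. by rewrite horner_prod; apply: eq_bigr => x _; rewrite hornerXsubC. Qed.

Lemma prod_subr_neq0 (s : seq F) (t : F) : \prod_(x <- s | x != t) (t - x) != 0.
Proof.
by rewrite prodf_seq_neq0; apply/allP => x _; apply/implyP; rewrite subr_eq0 eq_sym.
Qed.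

Lemma lagrange_interpolation (s : seq F) (q : {poly F}) :
  uniq s -> (size q <= size s)%N ->
  q = \sum_(t <- s) (q.[t] / \prod_(x <- s | x != t) (t - x))
                      *: \prod_(x <- s | x != t) ('X - x%:P).
Proof.
move=> s_uniq size_q; apply/eqP; rewrite -subr_eq0; set d := (q - _)%R.
have size_basis t : t \in s -> (size (\prod_(x <- s | x != t) ('X - x%:P))%R <= size s)%N.
  move=> ts; rewrite -big_filter size_prod_XsubC size_filter.
  rewrite -(count_predC (fun x => x != t)) -addn1 leq_add2l -has_count.
  by apply/hasP; exists t => //=; rewrite negbK.
have size_d : (size d <= size s)%N.
  rewrite (leq_trans (size_polyD _ _)) // geq_max size_q size_polyN.
  rewrite big_seq (big_ind (fun p : {poly F} => size p <= size s)%N) ?size_poly0 //.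
    by move=> p1 p2 h1 h2; rewrite (leq_trans (size_polyD _ _)) // geq_max h1.
  by move=> t ts; rewrite (leq_trans (size_scale_leq _ _)) ?size_basis.
have d_roots : all (root d) s.
  apply/allP => t ts; rewrite /root /d hornerD hornerN horner_sum.
  rewrite (bigD1_seq t) //= hornerZ horner_prod_XsubC divfK ?prod_subr_neq0 //.
  rewrite big1_seq ?addr0 ?subrr // => u /andP[ut _].
  have t_in : t \in [seq x <- s | x != u] by rewrite mem_filter eq_sym ut.
  rewrite hornerZ horner_prod_XsubC -[X in _ * X]big_filter (bigD1_seq t) ?filter_uniq //=.
  by rewrite subrr mul0r mulr0.
apply: contraTT size_d => d_neq0; rewrite -ltnNge; exact: max_poly_roots.
Qed.

Definition residue (W M : seq F) (t : F) : F :=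
  \prod_(x <- W) (t - x) / \prod_(x <- M | x != t) (t - x).

Lemma partial_fraction_prod (W M : seq F) (y : F) :
  uniq M -> size W = (size M).+1 -> y \notin M ->
  \prod_(x <- W) (y - x) / \prod_(x <- M) (y - x) =
  y - (\sum_(x <- W) x - \sum_(x <- M) x) + \sum_(t <- M) residue W M t / (y - t).
Proof.
move=> M_uniq sizeWM yM; set c := (\sum_(x <- W) x - _)%R.
set q := \prod_(x <- W) ('X - x%:P) - \prod_(x <- c :: M) ('X - x%:P).
have size_q : (size q <= size M)%N.
  have -> : size M = (size W).-1 by rewrite sizeWM.
  apply: size_sub_prod_XsubC => /=.
    by rewrite sizeWM.
  by rewrite big_cons /c subrK.
have qM t : t \in M -> q.[t] = \prod_(x <- W) (t - x).
  move=> tM; rewrite /q hornerD hornerN !horner_prod_XsubC big_cons.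
  by rewrite [X in _ * X](bigD1_seq t) //= subrr mul0r mulr0 subr0.
have yt t : t \in M -> y - t != 0 by move=> tM; rewrite subr_eq0; apply: contraNneq yM => ->.
have PM_neq0 : \prod_(x <- M) (y - x) != 0.
  by rewrite prodf_seq_neq0; apply/allP => t /yt.
have sumE : \sum_(t <- M) ((q.[t] / \prod_(x <- M | x != t) (t - x))
                              *: \prod_(x <- M | x != t) ('X - x%:P)).[y] =
            (\sum_(t <- M) residue W M t / (y - t)) * \prod_(x <- M) (y - x).
  rewrite mulr_suml; apply: eq_big_seq => t tM.
  rewrite hornerZ horner_prod_XsubC qM // [in RHS](bigD1_seq t) //= /residue.
  by field; rewrite yt // prod_subr_neq0.
have := congr1 (horner^~ y) (lagrange_interpolation _ _ M_uniq size_q).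
rewrite {1}/q hornerD hornerN !horner_prod_XsubC big_cons horner_sum sumE /= => qy.
by apply: (mulIf PM_neq0); rewrite divfK // mulrDl -qy; ring.
Qed.

End PartialFractions.

Arguments residue {F}.
Arguments partial_fraction_prod {F}.

Lemma prod_subr_sign {R : numDomainType} {t : R} {s : seq R} :
  t \is Num.real -> {in s, forall x, (x \is Num.real) && (x != t)} ->
  0 < (-1) ^+ count (fun x => t < x) s * \prod_(x <- s) (t - x).
Proof.
move=> t_real; elim: s => [|x s IH] s_ok; first by rewrite big_nil mulr1 ltr01.
rewrite big_cons /= exprD mulrACA; apply: mulr_gt0; last first.
  by apply: IH => y ys; apply: s_ok; rewrite inE ys orbT.
have /andP[x_real x_neq_t] := s_ok x (mem_head x s).
have [tx|xt] := boolP (t < x); first by rewrite mulN1r opprB subr_gt0.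
by rewrite mul1r subr_gt0 lt_neqAle x_neq_t real_leNgt.
Qed.

Lemma residue_lt0 {R : numFieldType} {W M : seq R} {t : R} :
  t \is Num.real -> {in W, forall x, (x \is Num.real) && (x != t)} ->
  {subset M <= Num.real} ->
  count (fun x => t < x) W = (count (fun x => t < x) M).+1 -> residue W M t < 0.
Proof.
move=> t_real W_ok M_real count_WM; rewrite /residue.
have := prod_subr_sign t_real W_ok; rewrite count_WM exprS.
have M'_ok : {in [seq x <- M | x != t], forall x, (x \is Num.real) && (x != t)}.
  by move=> x; rewrite mem_filter andbC => /andP[/M_real -> ->].
have := prod_subr_sign t_real M'_ok.
rewrite big_filter count_filter (@eq_count _ _ (fun x => t < x)); last first.
  by move=> x /=; case: (boolP (t < x)) => //= tx; rewrite (gt_eqF tx).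
set k := count _ M; set PW := \prod_(x <- W) _; set PM := \prod_(x <- M | _) _.
move=> sM sW; have PM_neq0 : PM != 0 by apply: contraTneq sM => ->; rewrite mulr0 ltxx.
have -> : PW / PM = - ((-1 * (-1) ^+ k * PW) / ((-1) ^+ k * PM)).
  by field; rewrite PM_neq0 signr_eq0.
by rewrite oppr_lt0 divr_gt0.
Qed.

Lemma adjmxE {C : numClosedFieldType} {m k : nat} (A : 'M[C]_(m, k)) i j :
  adjmx A i j = (A j i)^*.
Proof. by rewrite !mxE. Qed.

Lemma adjmxM {C : numClosedFieldType} {m k l : nat} (A : 'M[C]_(m, k)) (B : 'M[C]_(k, l)) :
  adjmx (A *m B) = adjmx B *m adjmx A.
Proof.
apply/matrixP => i j; rewrite !mxE rmorph_sum; apply: eq_bigr => h _.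
by rewrite !mxE rmorphM mulrC.
Qed.

Lemma adjmxB {C : numClosedFieldType} {m k : nat} (A B : 'M[C]_(m, k)) :
  adjmx (A - B) = adjmx A - adjmx B.
Proof. by apply/matrixP => i j; rewrite !mxE rmorphB. Qed.

Lemma skew_hermE {C : numClosedFieldType} {m : nat} (A : 'M[C]_m) :
  skew_herm A -> forall i j, (A i j)^* = - A j i.
Proof. by move=> skewA i j; rewrite -adjmxE skewA mxE. Qed.

Lemma mxtrace_mul_delta {R : pzRingType} {m : nat} (A : 'M[R]_m) i j :
  \tr (A *m delta_mx i j) = A j i.
Proof.
rewrite /mxtrace (bigD1 j) //= big1 => [|k k_j]; last first.
  by rewrite mxE big1 // => h _; rewrite mxE (negbTE k_j) andbF mulr0.
rewrite addr0 mxE (bigD1 i) //= big1 => [|h h_i]; last by rewrite mxE (negbTE h_i) mulr0.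
by rewrite mxE !eqxx mulr1 addr0.
Qed.

(** * Interlacing and the shapes of values *)

Section Slice.
Variables (C : numClosedFieldType) (n : nat) (lam mu : nat -> C).
Hypothesis lam_real : forall i, (i <= n)%N -> lam i \is Num.real.
Hypothesis mu_real : forall i, (i < n)%N -> mu i \is Num.real.
Hypothesis interlacing : forall i, (i < n)%N -> lam i.+1 <= mu i <= lam i.

Local Notation n_lam := (n_lam n lam).
Local Notation n_mu := (n_mu n mu).
Local Notation is_par := (is_par n lam mu).
Local Notation is_W := (is_W n lam mu).
Local Notation is_M := (is_M n lam mu).

Lemma count_interlacing (P : pred C) : (forall x y, x <= y -> P x -> P y) ->
  (count (fun i => P (mu i)) (iota 0 n) <= count (fun i => P (lam i)) (iota 0 n.+1)
   <= (count (fun i => P (mu i)) (iota 0 n)).+1)%N.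
Proof.
move=> P_up; apply/andP; split.
  apply: leq_trans (_ : count (fun i => P (lam i)) (iota 0 n) <= _)%N.
    apply: sub_in_count => i; rewrite mem_iota => /andP[_ i_lt] /P_up; apply.
    by case/andP: (interlacing _ i_lt).
  by rewrite -addn1 iotaD count_cat leq_addr.
rewrite /= -[X in (_ <= X)%N]add1n leq_add ?leq_b1 // -[1%N]addn0 iotaDl count_map.
apply: sub_in_count => i; rewrite mem_iota => /andP[_ i_lt] /P_up; apply.
by case/andP: (interlacing _ i_lt).
Qed.

Lemma n_lam_mu_bounds v :
  let above_lam := count (fun i => v < lam i) (iota 0 n.+1) in
  let above_mu := count (fun i => v < mu i) (iota 0 n) in
  (above_mu <= above_lam <= above_mu.+1)%N /\
  (above_mu + n_mu v <= above_lam + n_lam v <= (above_mu + n_mu v).+1)%N.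
Proof.
split; first by apply: (count_interlacing (fun x => v < x)) => x y xy /lt_le_trans; apply.
rewrite /Defs.n_lam /Defs.n_mu -!(count_le_split _ v).
by apply: (count_interlacing (fun x => v <= x)) => x y xy /le_trans; apply.
Qed.

Variant shape_spec (v : C) : bool -> bool -> bool -> Prop :=
  | ShapePar of n_lam v = n_mu v : shape_spec v true false false
  | ShapeW of n_lam v = (n_mu v).+1 : shape_spec v false true false
  | ShapeM of n_mu v = (n_lam v).+1 : shape_spec v false false true.

Lemma shapeP v : shape_spec v (is_par v) (is_W v) (is_M v).
Proof.
have [/andP[l1 l2] /andP[l3 l4]] := n_lam_mu_bounds v.
rewrite /Defs.is_par /Defs.is_W /Defs.is_M.
have : n_lam v = n_mu v \/ n_lam v = (n_mu v).+1 \/ n_mu v = (n_lam v).+1 by lia.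
case=> [e|[e|e]]; rewrite e eqxx.
- by rewrite ltn_eqF //; constructor.
- by rewrite gtn_eqF // ltn_eqF //; constructor.
- by rewrite !ltn_eqF //; constructor.
Qed.

Lemma count_lam_gt_M t : is_M t ->
  count (fun i => t < lam i) (iota 0 n.+1) = (count (fun i => t < mu i) (iota 0 n)).+1.
Proof. by move=> /eqP M_t; have [/andP[? ?] /andP[? ?]] := n_lam_mu_bounds t; lia. Qed.

Definition values : seq C :=
  undup ([seq lam i | i <- iota 0 n.+1] ++ [seq mu i | i <- iota 0 n]).
Definition W_values : seq C := [seq v <- values | is_W v].
Definition M_values : seq C := [seq v <- values | is_M v].

Lemma sum_W_values_sub_M_values (V : zmodType) (F : C -> V) :
  \sum_(v <- W_values) F v - \sum_(v <- M_values) F v =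
  \sum_(i < n.+1) F (lam i) - \sum_(i < n) F (mu i).
Proof.
rewrite !big_filter (big_ord_iota _ _ xpredT (F \o lam)) (big_ord_iota _ _ xpredT (F \o mu)).
have lam_values : {subset [seq lam i | i <- iota 0 n.+1] <= values}.
  by move=> v v_lam; rewrite mem_undup mem_cat v_lam.
have mu_values : {subset [seq mu i | i <- iota 0 n] <= values}.
  by move=> v v_mu; rewrite mem_undup mem_cat v_mu orbT.
rewrite (sum_by_values _ lam values F (undup_uniq _) lam_values).
rewrite (sum_by_values _ mu values F (undup_uniq _) mu_values).
rewrite (big_mkcond is_W) (big_mkcond is_M) -!sumrB; apply: eq_bigr => v _.
rewrite -/(Defs.n_lam n lam v) -/(Defs.n_mu n mu v).
case: shapeP => ->; rewrite ?subrr //.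
  by rewrite mulrS addrK subr0.
by rewrite sub0r mulrSr opprD addrA subrr add0r.
Qed.

Lemma size_W_values : size W_values = (size M_values).+1.
Proof.
have := sum_W_values_sub_M_values _ (fun _ => 1 : int).
rewrite !big_const_ord !big_const_seq !count_predT !iter_addr_0 !natz; lia.
Qed.

Lemma count_gt_W_values t : is_M t ->
  count (> t) W_values = (count (> t) M_values).+1.
Proof.
move=> M_t; have := sum_W_values_sub_M_values _ (fun v => ((t < v)%R)%:R : int).
rewrite (big_ord_iota _ _ xpredT (fun i => ((t < lam i)%R)%:R)).
rewrite (big_ord_iota _ _ xpredT (fun i => ((t < mu i)%R)%:R)).
rewrite !sumr_nat_count count_lam_gt_M // !natz.
(* [set] merges copies of these counts that differ only in an implicit type, for [lia]. *)
by set cW := count _ W_values; set cM := count _ M_values; lia.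
Qed.

Lemma sum_W_values_sub_M_values_id :
  \sum_(v <- W_values) v - \sum_(v <- M_values) v = c_ n lam mu.
Proof. exact: sum_W_values_sub_M_values. Qed.

Lemma values_real v : v \in values -> v \is Num.real.
Proof.
rewrite mem_undup mem_cat => /orP[] /mapP[i]; rewrite mem_iota => /andP[_ lt_i] ->.
  exact: lam_real.
exact: mu_real.
Qed.

Lemma n_lam_gt0 v : (0 < n_lam v)%N = (v \in lam_vals n lam).
Proof. by rewrite /Defs.n_lam -has_count mem_undup -has_pred1 has_map. Qed.

Lemma n_mu_gt0 v : (0 < n_mu v)%N = (v \in mu_vals n mu).
Proof. by rewrite /Defs.n_mu -has_count mem_undup -has_pred1 has_map. Qed.

Lemma lam_vals_sub_values : {subset lam_vals n lam <= values}.
Proof. by move=> v; rewrite !mem_undup mem_cat => ->. Qed.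

Lemma mu_vals_sub_values : {subset mu_vals n mu <= values}.
Proof. by move=> v; rewrite !mem_undup mem_cat orbC => ->. Qed.

Lemma W_lam_vals v : is_W v -> v \in lam_vals n lam.
Proof. by move=> /eqP W_v; rewrite -n_lam_gt0 W_v. Qed.

Lemma M_mu_vals v : is_M v -> v \in mu_vals n mu.
Proof. by move=> /eqP M_v; rewrite -n_mu_gt0 M_v. Qed.

Lemma mem_W_values v : (v \in W_values) = is_W v.
Proof. by rewrite mem_filter andb_idr // => /W_lam_vals /lam_vals_sub_values. Qed.

Lemma mem_M_values v : (v \in M_values) = is_M v.
Proof. by rewrite mem_filter andb_idr // => /M_mu_vals /mu_vals_sub_values. Qed.

Lemma perm_W_values : perm_eq [seq v <- lam_vals n lam | is_W v] W_values.
Proof.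
apply: uniq_perm; rewrite ?filter_uniq ?undup_uniq // => v.
by rewrite mem_filter mem_W_values andb_idr // => /W_lam_vals.
Qed.

Lemma perm_M_values : perm_eq [seq v <- mu_vals n mu | is_M v] M_values.
Proof.
apply: uniq_perm; rewrite ?filter_uniq ?undup_uniq // => v.
by rewrite mem_filter mem_M_values andb_idr // => /M_mu_vals.
Qed.

Lemma r_sqE t : is_M t -> r_sq n lam mu t = - residue W_values M_values t.
Proof.
move=> M_t; rewrite /r_sq M_t /residue prodfV.
rewrite -big_filter (perm_big _ perm_W_values).
by rewrite -big_filter_cond (perm_big _ perm_M_values) big_filter_cond.
Qed.

Lemma par_notM v : is_par v -> ~~ is_M v. Proof. by case: shapeP. Qed.

Lemma notM_notpar_W v : ~~ is_M v -> ~~ is_par v -> is_W v. Proof. by case: shapeP. Qed.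

Lemma W_neq_M v t : is_W v -> is_M t -> v != t.
Proof. by move=> W_v M_t; apply: contraTneq W_v => ->; move: M_t; case: shapeP. Qed.

Lemma r_sq_gt0 t : is_M t -> 0 < r_sq n lam mu t.
Proof.
move=> M_t; rewrite r_sqE // oppr_gt0.
apply: residue_lt0; last exact: count_gt_W_values.
- exact/values_real/mu_vals_sub_values/M_mu_vals.
- move=> v; rewrite mem_W_values => W_v; rewrite W_neq_M // andbT.
  exact/values_real/lam_vals_sub_values/W_lam_vals.
- by move=> v; rewrite mem_M_values => /M_mu_vals/mu_vals_sub_values/values_real.
Qed.

Local Notation r := (r_ n lam mu).

Lemma r_sqr t : r t ^+ 2 = r_sq n lam mu t.
Proof. exact: sqrtCK. Qed.

Lemma r_eq0 t : ~~ is_M t -> r t = 0.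
Proof. by move=> /negbTE M_t; rewrite /r_ /r_sq M_t sqrtC0. Qed.

Lemma r_neq0 t : is_M t -> r t != 0.
Proof. by move=> M_t; rewrite sqrtC_eq0 gt_eqF ?r_sq_gt0. Qed.

Lemma r_real t : r t \is Num.real.
Proof.
have [M_t|/r_eq0 ->] := boolP (is_M t); last exact: real0.
exact/sqrtC_real/ltW/r_sq_gt0.
Qed.

Lemma C_W_eq0 l : is_W l -> C_ n lam mu l = 0.
Proof.
move=> W_l; have l_notin_M : l \notin M_values.
  by rewrite mem_M_values; apply: contraTN W_l; case: shapeP.
have := partial_fraction_prod W_values M_values l (filter_uniq _ (undup_uniq _))
  size_W_values l_notin_M.
rewrite (bigD1_seq l) ?mem_W_values ?filter_uniq ?undup_uniq //= subrr !mul0r.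
rewrite sum_W_values_sub_M_values_id => pf.
rewrite /C_ -(big_filter (mu_vals n mu)) (perm_big _ perm_M_values) -/(c_ n lam mu).
under eq_big_seq => t /[!mem_M_values] M_t do rewrite r_sqr r_sqE // mulNr.
rewrite sumrN; set S := \sum_(t <- M_values) _ in pf *.
by rewrite -[RHS]oppr0 pf; ring.
Qed.

(** * The symplectic slice at [ptilde] *)

Local Notation p := (ptilde n lam mu).
Local Notation L := (@lift n.+1 ord0).
Local Notation z := (z_ n lam mu).
Local Notation c := (c_ n lam mu).

Lemma ptilde00 : p ord0 ord0 = c. Proof. by rewrite mxE. Qed.
Lemma ptilde0L j : p ord0 (L j) = (z j)^*. Proof. by rewrite mxE lift0. Qed.
Lemma ptildeL0 j : p (L j) ord0 = z j. Proof. by rewrite mxE lift0. Qed.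
Lemma ptildeLL j k : p (L j) (L k) = if j == k then mu j else 0.
Proof. by rewrite mxE !lift0 /= (inj_eq (@lift_inj _ ord0)); case: eqP. Qed.

Lemma sum_mul_ptildeLL (F : 'I_n -> C) k : \sum_(i < n) F i * p (L i) (L k) = F k * mu k.
Proof.
rewrite (bigD1 k) //= ptildeLL eqxx big1 ?addr0 // => i /negbTE i_k.
by rewrite ptildeLL i_k mulr0.
Qed.

Lemma sum_ptildeLL_mul (F : 'I_n -> C) j : \sum_(i < n) p (L j) (L i) * F i = mu j * F j.
Proof.
rewrite (bigD1 j) //= ptildeLL eqxx big1 ?addr0 // => i /negbTE i_j.
by rewrite ptildeLL eq_sym i_j mul0r.
Qed.

Lemma bracketLL (X : 'M[C]_n.+1) j k :
  bracket X p (L j) (L k) = X (L j) ord0 * (z k)^* + X (L j) (L k) * mu k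
                            - z j * X ord0 (L k) - mu j * X (L j) (L k).
Proof.
rewrite !mxE !big_ord_recl ptilde0L ptildeL0.
rewrite (sum_mul_ptildeLL (fun i => X (L j) (L i))) (sum_ptildeLL_mul (fun i => X (L i) (L k))).
by rewrite opprD addrA.
Qed.

Lemma bracketL0 (X : 'M[C]_n.+1) j :
  bracket X p (L j) ord0 = X (L j) ord0 * c + \sum_(l < n) X (L j) (L l) * z l
                           - z j * X ord0 ord0 - mu j * X (L j) ord0.
Proof.
rewrite !mxE !big_ord_recl ptilde00 ptildeL0 (sum_ptildeLL_mul (fun i => X (L i) ord0)).
by under eq_bigr do rewrite ptildeL0; rewrite opprD addrA.
Qed.

Lemma c_real : c \is Num.real.
Proof.
rewrite rpredB // rpred_sum // => i _; [apply: lam_real | apply: mu_real].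
  by rewrite -ltnS.
exact: ltn_ord.
Qed.

Lemma zE j : z j = if first_occurrence mu j then r (mu j) else 0.
Proof. by rewrite /z_ /first_occurrence; case: has. Qed.

Lemma z_real j : z j \is Num.real.
Proof. by rewrite zE; case: ifP => _; rewrite ?r_real ?real0. Qed.

Lemma ptilde_herm : adjmx p = p.
Proof.
apply/matrixP => i j; rewrite adjmxE.
case: (unliftP ord0 i) => [i' ->|->]; case: (unliftP ord0 j) => [j' ->|->].
- rewrite !ptildeLL eq_sym; case: eqP => [->|_]; last by rewrite conjC0.
  exact/conj_Creal/mu_real.
- by rewrite ptilde0L ptildeL0 conjCK.
- by rewrite ptilde0L ptildeL0.
- by rewrite ptilde00 conj_Creal // c_real.
Qed.

Lemma bracket_herm (Y : 'M[C]_n.+1) : skew_herm Y -> adjmx (bracket Y p) = bracket Y p.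
Proof.
move=> skewY; rewrite /bracket adjmxB !adjmxM ptilde_herm skewY.
by rewrite mulmxN mulNmx opprK addrC.
Qed.

Lemma omegaL_bracket (X Z : 'M[C]_n.+1) :
  omegaL p X Z = - ('i^-1 * \tr (bracket X p *m Z)).
Proof.
rewrite /omegaL /bracket mulmxBr mulmxBl !raddfB /= -mulrN opprB; congr (_ * (_ - _)).
  by rewrite mulmxA.
by rewrite mulmxA mxtrace_mulC mulmxA.
Qed.

Lemma in_perp_trace {X : 'M[C]_n.+1} : in_perp lam mu X ->
  forall Z, in_LieK Z -> \tr (bracket X p *m Z) = 0.
Proof.
move=> perpX Z KZ; apply/eqP; have /eqP := perpX Z KZ.
by rewrite omegaL_bracket oppr_eq0 mulf_eq0 invr_eq0 (negbTE (neq0Ci _)).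
Qed.

Lemma in_LieK_delta j k {a b : C} : b^* = - a ->
  in_LieK (a *: delta_mx (L j) (L k) + b *: delta_mx (L k) (L j)).
Proof.
move=> ab; have ba : a^* = - b by rewrite -[a]opprK -ab rmorphN /= conjCK.
have L_neq0 l : (ord0 == L l) = false by apply/negbTE/neq_lift.
split; [|split] => [|t|t]; rewrite ?mxE ?L_neq0 ?andbF /= ?mulr0 ?addr0 //.
apply/matrixP => r t; rewrite adjmxE !mxE rmorphD !rmorphM /= !conjC_nat ab ba.
by rewrite ![(t == _) && _]andbC opprD addrC !mulNr.
Qed.

Lemma in_perp_bracketLL {X : 'M[C]_n.+1} : in_perp lam mu X ->
  forall j k, bracket X p (L j) (L k) = 0.
Proof.
move=> perpX j k; set a := bracket X p.
have trace_delta (u v : C) : v^* = - u -> u * a (L k) (L j) + v * a (L j) (L k) = 0.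
  move=> uv; rewrite -(in_perp_trace perpX _ (in_LieK_delta j k uv)).
  by rewrite mulmxDr mxtraceD -!scalemxAr !mxtraceZ !mxtrace_mul_delta.
have := trace_delta 1 (-1); rewrite rmorphN1 mul1r mulN1r => /(_ erefl)/eqP.
rewrite subr_eq0 => /eqP a_kj.
have /eqP := trace_delta 'i 'i (conjCi _).
by rewrite a_kj -mulrDr mulf_eq0 (negbTE (neq0Ci _)) -mulr2n mulrn_eq0 => /eqP.
Qed.

Lemma in_perp_relation {X : 'M[C]_n.+1} : skew_herm X -> in_perp lam mu X ->
  forall j k : 'I_n,
  X (L j) ord0 * z k + z j * (X (L k) ord0)^* + X (L j) (L k) * (mu k - mu j) = 0.
Proof.
move=> skewX perpX j k; rewrite -(in_perp_bracketLL perpX j k) bracketLL.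
by rewrite (conj_Creal (z_real k)) -[X ord0 (L k)]opprK -skew_hermE //; ring.
Qed.

Lemma z_eq0 {j} : ~~ is_M (mu j) -> z j = 0.
Proof. by move=> M_j; rewrite zE r_eq0 // if_same. Qed.

Lemma z_neq0 j : (z j != 0) = is_M (mu j) && first_occurrence mu j.
Proof.
rewrite zE; case: ifP => _; rewrite ?eqxx ?andbF // andbT.
by have [/r_neq0 ->|M_j] := boolP (is_M (mu j)); rewrite ?r_eq0 ?eqxx.
Qed.

Lemma sum_z_sqr (m : C) :
  \sum_(l < n) z l ^+ 2 / (m - mu l) = \sum_(t <- mu_vals n mu | is_M t) r t ^+ 2 / (m - t).
Proof.
rewrite [RHS]big_mkcond /mu_vals -sum_first_occurrences; apply: eq_bigr => l _.
rewrite zE; case: ifP => _; last by rewrite expr2 !mul0r.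
by case: ifP => // /negbT/r_eq0 ->; rewrite expr2 !mul0r.
Qed.

Lemma bracketL0_nonM {X : 'M[C]_n.+1} {j : 'I_n} : skew_herm X -> in_perp lam mu X ->
  ~~ is_M (mu j) -> bracket X p (L j) ord0 = C_ n lam mu (mu j) * X (L j) ord0.
Proof.
move=> skewX perpX M_j; rewrite bracketL0 (z_eq0 M_j) mul0r subr0.
have X_LL l : X (L j) (L l) * z l = X (L j) ord0 * (z l ^+ 2 / (mu j - mu l)).
  have [z_l0|z_l] := eqVneq (z l) 0; first by rewrite z_l0 expr2 !mulr0 !mul0r mulr0.
  have mu_jl : mu j - mu l != 0.
    rewrite subr_eq0; apply: contraNneq M_j => ->.
    by move: z_l; rewrite z_neq0 => /andP[].
  have := in_perp_relation skewX perpX j l; rewrite (z_eq0 M_j) mul0r addr0 => rel.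
  suff -> : X (L j) (L l) = X (L j) ord0 * z l / (mu j - mu l) by field.
  apply: (mulIf mu_jl); rewrite divfK //; apply/eqP.
  by rewrite -subr_eq0 -oppr_eq0 -rel; apply/eqP; ring.
rewrite (eq_bigr _ (fun l _ => X_LL l)) -mulr_sumr sum_z_sqr /C_ -/c; ring.
Qed.

Section Perp.
Variable X : 'M[C]_n.+1.
Hypotheses (skewX : skew_herm X) (perpX : in_perp lam mu X).

Lemma in_perp_col0_eq0 (j : 'I_n) :
  is_M (mu j) -> ~~ first_occurrence mu j -> X (L j) ord0 = 0.
Proof.
(* [z] vanishes at [j] but not at the first index [k] of the block of [mu j], where the
   relation for [(j, k)] reduces to [x_j z_k = 0]. *)
move=> M_j not_first; have [k k_j [mu_kj first_k]] := first_occurrence_before not_first.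
pose k' := Ordinal (ltn_trans k_j (ltn_ord j)).
have z_k : z k' != 0 by rewrite z_neq0 /= mu_kj M_j.
have := in_perp_relation skewX perpX j k'; rewrite (zE j) (negbTE not_first) /= mu_kj.
by rewrite subrr mulr0 mul0r !addr0 => /eqP; rewrite mulf_eq0 (negbTE z_k) orbF => /eqP.
Qed.

Lemma in_perp_col0_imag (j : 'I_n) : z j != 0 -> (X (L j) ord0)^* = - X (L j) ord0.
Proof.
move=> z_j; have := in_perp_relation skewX perpX j j; rewrite subrr mulr0 addr0 => rel.
have /eqP : z j * ((X (L j) ord0)^* + X (L j) ord0) = 0 by rewrite -rel; ring.
by rewrite mulf_eq0 (negbTE z_j) addr_eq0 => /eqP.
Qed.

Lemma in_perp_LL_imag (j l : 'I_n) :
  z j != 0 -> z l != 0 -> (X (L j) (L l))^* = - X (L j) (L l).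
Proof.
move=> z_j z_l; have [<-|j_l] := eqVneq j l; first exact: skew_hermE.
have mu_lj : mu l - mu j != 0.
  rewrite subr_eq0; apply: contra j_l => /eqP mu_lj; apply/eqP/val_inj/esym.
  move: z_j z_l; rewrite !z_neq0 => /andP[_ ?] /andP[_ ?].
  exact: first_occurrence_inj mu_lj.
have rel := in_perp_relation skewX perpX j l.
have rel' := congr1 (fun x : C => x^*) rel.
rewrite /= conjC0 !rmorphD !rmorphM rmorphB /= in rel'.
rewrite conjCK !(conj_Creal (z_real _)) !(conj_Creal (mu_real _ (ltn_ord _))) in rel'.
rewrite !in_perp_col0_imag // in rel rel'.
have /eqP : ((X (L j) (L l))^* + X (L j) (L l)) * (mu l - mu j) = 0.
  by rewrite -[RHS]addr0 -{1}rel -rel'; ring.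
by rewrite mulf_eq0 (negbTE mu_lj) orbF addr_eq0 => /eqP.
Qed.

Lemma in_perp_bracketL0_imag (j : 'I_n) : z j != 0 ->
  (bracket X p (L j) ord0)^* = - bracket X p (L j) ord0.
Proof.
move=> z_j.
have sum_imag : (\sum_(l < n) X (L j) (L l) * z l)^* = - \sum_(l < n) X (L j) (L l) * z l.
  rewrite rmorph_sum -sumrN; apply: eq_bigr => l _; rewrite rmorphM /= (conj_Creal (z_real l)).
  have [->|z_l] := eqVneq (z l) 0; first by rewrite !mulr0 oppr0.
  by rewrite in_perp_LL_imag // mulNr.
rewrite bracketL0 !rmorphB !rmorphD !rmorphM /= sum_imag.
rewrite !(conj_Creal (z_real _)) (conj_Creal c_real) (conj_Creal (mu_real _ (ltn_ord _))).
by rewrite in_perp_col0_imag // skew_hermE //; ring.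
Qed.

End Perp.

Lemma tr_bracket_mul (X Y : 'M[C]_n.+1) : skew_herm X -> skew_herm Y -> in_perp lam mu Y ->
  \tr (bracket Y p *m X) = \sum_(j < n) ((bracket Y p (L j) ord0)^* * X (L j) ord0
                                          - bracket Y p (L j) ord0 * (X (L j) ord0)^*).
Proof.
move=> skewX skewY perpY; set b := bracket Y p.
have b00 : b ord0 ord0 = 0.
  have : \tr b = 0 by rewrite /b /bracket raddfB /= mxtrace_mulC subrr.
  by rewrite /mxtrace big_ord_recl big1 ?addr0 // => j _; rewrite /b in_perp_bracketLL.
have b0L j : b ord0 (L j) = (b (L j) ord0)^* by rewrite -adjmxE bracket_herm.
rewrite /mxtrace big_ord_recl mxE big_ord_recl b00 mul0r add0r.
rewrite [Z in _ + Z = _](eq_bigr (fun j => b (L j) ord0 * X ord0 (L j))) => [|j _]; last first.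
  by rewrite mxE big_ord_recl big1 ?addr0 // => k _; rewrite in_perp_bracketLL ?mul0r.
rewrite -big_split /=; apply: eq_bigr => j _.
by rewrite b0L -[X ord0 (L j)]opprK -skew_hermE //; ring.
Qed.

Lemma omegaL_perp (X Y : 'M[C]_n.+1) : skew_herm X -> skew_herm Y -> in_perp lam mu Y ->
  omegaL p X Y = 'i^-1 * \sum_(j < n) ((bracket Y p (L j) ord0)^* * X (L j) ord0
                                        - bracket Y p (L j) ord0 * (X (L j) ord0)^*).
Proof.
move=> skewX skewY perpY; rewrite -tr_bracket_mul // -[RHS]opprK -omegaL_bracket.
by rewrite /omegaL -[X *m Y - _]opprB mulmxN raddfN mulrN.
Qed.

Lemma omegaLM_sum (u w : nat -> C) :
  omegaLM n lam mu u w =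
  'i^-1 * \sum_(j < n | is_par (mu j)) (- ((u j)^* * w j) + (w j)^* * u j) / C_ n lam mu (mu j).
Proof.
by rewrite /omegaLM (sum_fibers mu _ _ _ (fun m => (C_ n lam mu m)^-1)) -big_ord_iota.
Qed.

Lemma C_real m : m \is Num.real -> C_ n lam mu m \is Num.real.
Proof.
move=> m_real; rewrite /C_ (_ : \sum_(i < n.+1) lam i - _ = c) //.
apply: rpredD; first exact: rpredB c_real m_real.
apply: rpred_sum => t /M_mu_vals/mu_vals_sub_values/values_real t_real.
by rewrite rpred_div ?rpredX ?r_real ?rpredB.
Qed.

Lemma Psi_par (A : 'M[C]_n.+1) (j : 'I_n) : is_par (mu j) -> Psi lam mu A j = A (L j) ord0.
Proof.
move=> par_j; rewrite /Psi par_j; congr (A _ _); apply: val_inj.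
by rewrite /= inordK ?lift0 // ltnS ltn_ord.
Qed.

Lemma slice_summand (X Y : 'M[C]_n.+1) (j : 'I_n) :
  skew_herm X -> skew_herm Y -> in_perp lam mu X -> in_perp lam mu Y ->
  (bracket Y p (L j) ord0)^* * X (L j) ord0 - bracket Y p (L j) ord0 * (X (L j) ord0)^* =
  if is_par (mu j) then
    (- ((Psi lam mu (bracket X p) j)^* * Psi lam mu (bracket Y p) j)
     + (Psi lam mu (bracket Y p) j)^* * Psi lam mu (bracket X p) j) / C_ n lam mu (mu j)
  else 0.
Proof.
move=> skewX skewY perpX perpY; have [M_j|notM_j] := boolP (is_M (mu j)).
  rewrite (negbTE (contraL (@par_notM _) M_j)).
  have [first_j|not_first] := boolP (first_occurrence mu j); last first.
    by rewrite (in_perp_col0_eq0 _ skewX perpX) // conjC0 !mulr0 subrr.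
  have z_j : z j != 0 by rewrite z_neq0 M_j.
  rewrite (in_perp_col0_imag _ skewX perpX) // (in_perp_bracketL0_imag _ skewY perpY) //.
  by rewrite mulNr mulrN opprK addNr.
rewrite (bracketL0_nonM skewY) //; have [par_j|notpar_j] := boolP (is_par (mu j)).
  rewrite !Psi_par // (bracketL0_nonM skewX) // (bracketL0_nonM skewY) //.
  rewrite !rmorphM /= (conj_Creal (C_real _ (mu_real _ (ltn_ord j)))).
  have [->|C_neq0] := eqVneq (C_ n lam mu (mu j)) 0.
    by rewrite !(mul0r, mulr0, invr0, subrr).
  by field.
by rewrite C_W_eq0 ?notM_notpar_W // !mul0r conjC0 mul0r subrr.
Qed.

End Slice.

Theorem proposition4p7 (C : numClosedFieldType) (n : nat) (lam mu : nat -> C)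
  (hn : (1 <= n)%N)
  (hlam_real : forall i, (i <= n)%N -> lam i \is Num.real)
  (hmu_real : forall i, (i < n)%N -> mu i \is Num.real)
  (hinterlace : forall i, (i < n)%N -> lam i.+1 <= mu i <= lam i)
  (X Y : 'M[C]_(n.+1)) (hX : skew_herm X) (hY : skew_herm Y)
  (hXperp : in_perp lam mu X) (hYperp : in_perp lam mu Y) :
  omegaL (ptilde n lam mu) X Y =
  omegaLM n lam mu (Psi lam mu (bracket X (ptilde n lam mu)))
                 (Psi lam mu (bracket Y (ptilde n lam mu))).
Proof.
rewrite omegaL_perp // omegaLM_sum; congr (_ * _); rewrite [RHS]big_mkcond.
by apply: eq_bigr => j _; rewrite slice_summand.
Qed.
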